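(* Let $H\in\mathcal K_r(n)$ and let $X\subseteq[n]$. Let $\mathcal A$ be the set of all hyperedges $A$ of $H$ with $X\subseteq A$ and $|A|\le n/2$. If $\mathcal A$ is nonempty, then $\bigcap_{A\in\mathcal A} A$ belongs to $\mathcal A$.
   Context: $\mathcal K_r(n)$ is the class of hypergraphs on vertex set $V=[n]$ (identified with their hyperedge sets $\mathcal E$) satisfying: (R0) every $X\subseteq V$ with $|X|\le r$ is in $\mathcal E$; (R1) $A\in\mathcal E\Rightarrow V\setminus A\in\mathcal E$; (R2) $A,B\in\mathcal E$ and $|A\cap B|\ge r\Rightarrow A\cup B\in\mathcal E$. *)

From mathcomp Require Import all_boot.
Set Implicit Arguments. Unset Strict Implicit. Unset Printing Implicit Defensive.

Definition in_K (r : nat) {n : nat} (E : {set {set 'I_n}}) : Prop :=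
  (* (R0) *) (forall X : {set 'I_n}, #|X| <= r -> X \in E) /\
  (* (R1) *) (forall A, A \in E -> ~: A \in E) /\
  (* (R2) *) (forall A B, A \in E -> B \in E -> r <= #|A :&: B| -> A :|: B \in E).

Definition calA {n : nat} (E : {set {set 'I_n}}) (X : {set 'I_n}) : {set {set 'I_n}} :=
  [set A in E | (X \subset A) && (2 * #|A| <= n)].

From mathcomp Require Import all_boot.
From mathcomp Require Import zify.

Set Implicit Arguments.
Unset Strict Implicit.
Unset Printing Implicit Defensive.

(* If |A| + |B| <= n, then A ∩ B is a hyperedge: either it is small (R0), or
   the complements meet in at least |A ∩ B| > r points, so (R2) and (R1) give
   ~(~A ∪ ~B) = A ∩ B.  Hence the family calA E X is closed under
   intersection, and an intersection-closed family contains its smallest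
   member, which lies below every other member. *)

Lemma mem_bigcap_setI_closed (T : finType) (F : {set {set T}}) :
  {in F &, forall A B, A :&: B \in F} -> F != set0 ->
  \bigcap_(A in F) A \in F.
Proof.
move=> FI /set0Pn[A0 FA0].
have [M FM Mmin] := arg_minnP (fun A : {set T} => #|A|) FA0.
suff -> : \bigcap_(A in F) A = M by [].
apply/eqP; rewrite eqEsubset bigcap_inf //=; apply/bigcapsP => A FA.
by apply/setIidPl/eqP; rewrite eqEcard subsetIl; exact: Mmin (FI _ _ FM FA).
Qed.

Lemma in_K_setI (r n : nat) (E : {set {set 'I_n}}) (A B : {set 'I_n}) :
  in_K r E -> A \in E -> B \in E -> #|A| + #|B| <= n -> A :&: B \in E.
Proof.
move=> [R0 [R1 R2]] AE BE AB_le_n.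
have [small | big] := leqP #|A :&: B| r; first exact: R0.
have card_CI : #|A :&: B| <= #|~: A :&: ~: B|.
  have := cardsC (A :|: B); have := cardsUI A B.
  by rewrite -setCU card_ord; lia.
rewrite -[A :&: B]setCK setCI; apply/R1/R2; rewrite ?R1 //.
by rewrite (leq_trans (ltnW big)).
Qed.

Lemma calA_setI (r n : nat) (E : {set {set 'I_n}}) (X : {set 'I_n}) :
  in_K r E -> {in calA E X &, forall A B, A :&: B \in calA E X}.
Proof.
move=> EK A B; rewrite !inE => /and3P[AE XA hA] /and3P[BE XB hB].
rewrite subsetI XA XB (in_K_setI EK) //; last by lia.
by rewrite (leq_trans _ hA) // leq_mul2l subset_leq_card ?subsetIl ?orbT.
Qed.

Theorem mainTheorem10 (r n : nat) (E : {set {set 'I_n}}) (X : {set 'I_n}) :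
  in_K r E ->
  calA E X != set0 ->
  \bigcap_(A in calA E X) A \in calA E X.
Proof. by move=> EK; apply: mem_bigcap_setI_closed; apply: calA_setI EK. Qed.
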